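(* Let $k\ge 2$ and $n$ be integers with $2k-1 \le n$. Then $$N(BM,k,n) \le N(GM,k,n)\le (n-k+1)\cdot\mathsf{m}(k-1,n-1).$$
   Context: We are given $n$ balls, the set $[n]=\{1,\dots,n\}$, each colored with one of two colors by an unknown coloring. A ball $i$ is a majority ball if more than $n/2$ balls have the same color as $i$. A query is a subset $Q\subseteq[n]$ with $|Q|=k$. In the General (Yes-No) Model (GM), the answer to a query $Q$ is YES if $Q$ contains two balls of different colors and NO otherwise. In Borzyszkowski's Model (BM), the answer is YES together with a pair of balls of $Q$ having different colors (the pair may be any such pair) if such a pair exists, and NO if all balls of $Q$ have the same color. A non-adaptive strategy is a family of queries $Q_1,\dots,Q_q$ fixed in advance. It succeeds if for every coloring and every admissible sequence of answers, the answers determine the outcome: either every coloring consistent with the answers has no majority ball, or there is a ball that is a majority ball in every coloring consistent with the answers. $N(GM,k,n)$ and $N(BM,k,n)$ denote the minimum number of queries in a successful non-adaptive strategy in the respective model. A hypergraph has Property B if its vertices can be 2-colored with no monochromatic edge. For $k\ge1$ and $n\ge 2k-1$, $\mathsf{m}(k,n)$ is the minimum number of edges of a $k$-uniform hypergraph on $n$ vertices that does not have Property B. *)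

From mathcomp Require Import all_boot.
From Stdlib Require Import ClassicalEpsilon.

Set Implicit Arguments.
Unset Strict Implicit.
Unset Printing Implicit Defensive.

(* Balls are 'I_n; a 2-coloring is a finite function 'I_n -> bool. *)

(* Minimum of a predicate on nat; 0 by convention if the predicate is never
   satisfied (classical choice, only used to name the minimum). *)
Definition nat_min (P : pred nat) : nat :=
  match excluded_middle_informative (exists q, P q) with
  | left h => ex_minn h
  | right _ => 0
  end.

Definition monochromatic n (c : {ffun 'I_n -> bool}) (Q : {set 'I_n}) : bool :=
  [forall x in Q, forall y in Q, c x == c y].

Definition majority n (c : {ffun 'I_n -> bool}) (i : 'I_n) : bool :=
  n < 2 * #|[set j | c j == c i]|.

Definition has_majority n (c : {ffun 'I_n -> bool}) : bool :=
  [exists i, majority c i].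

(* The answers determine the outcome, where [consistent] is the set of
   colorings consistent with the answers. *)
Definition determines n (consistent : pred {ffun 'I_n -> bool}) : bool :=
  [forall c', consistent c' ==> ~~ has_majority c']
  || [exists i, forall c', consistent c' ==> majority c' i].

Definition valid_strategy n k q (Qs : q.-tuple {set 'I_n}) : bool :=
  [forall j, #|tnth Qs j| == k].

(* General Model: answer YES iff Q contains two balls of different colors *)
Definition GM_answer n (c : {ffun 'I_n -> bool}) (Q : {set 'I_n}) : bool :=
  ~~ monochromatic c Q.

Definition successful_GM n q (Qs : q.-tuple {set 'I_n}) : bool :=
  [forall c : {ffun 'I_n -> bool},
     determines (fun c' : {ffun 'I_n -> bool} =>
       [forall j, GM_answer c' (tnth Qs j) == GM_answer c (tnth Qs j)])].

(* Borzyszkowski's Model: an answer is None (NO) or Some (x, y) (YES with a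
   pair of balls of Q of different colors). [BM_admissible c Q a] : a is an
   admissible answer to Q under coloring c. *)
Definition BM_admissible n (c : {ffun 'I_n -> bool}) (Q : {set 'I_n})
  (a : option ('I_n * 'I_n)) : bool :=
  match a with
  | None => monochromatic c Q
  | Some (x, y) => [&& x \in Q, y \in Q & c x != c y]
  end.

Definition BM_admissible_seq n q (Qs : q.-tuple {set 'I_n})
  (c : {ffun 'I_n -> bool}) (a : q.-tuple (option ('I_n * 'I_n))) : bool :=
  [forall j, BM_admissible c (tnth Qs j) (tnth a j)].

Definition successful_BM n q (Qs : q.-tuple {set 'I_n}) : bool :=
  [forall c : {ffun 'I_n -> bool}, forall a : q.-tuple (option ('I_n * 'I_n)),
     BM_admissible_seq Qs c a ==> determines (fun c' => BM_admissible_seq Qs c' a)].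

Definition N_GM (k n : nat) : nat :=
  nat_min (fun q => [exists Qs : q.-tuple {set 'I_n},
                       valid_strategy k Qs && successful_GM Qs]).

Definition N_BM (k n : nat) : nat :=
  nat_min (fun q => [exists Qs : q.-tuple {set 'I_n},
                       valid_strategy k Qs && successful_BM Qs]).

Definition propertyB n (H : {set {set 'I_n}}) : bool :=
  [exists c : {ffun 'I_n -> bool}, forall e in H, ~~ monochromatic c e].

Definition m_B (k n : nat) : nat :=
  nat_min (fun q => [exists H : {set {set 'I_n}},
                       [&& #|H| == q, [forall e in H, #|e| == k] & ~~ propertyB H]]).

(* Take a (k-1)-uniform hypergraph E without Property B on the first n-1
   balls and ask every query e :|: [set v] with e in E and v outside e.  Some
   edge e is monochromatic for the true coloring c.  If a ball v outside e has
   the color of e, the query e :|: [set v] answers NO, so e is monochromatic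
   in every consistent coloring, and the answers to the queries e :|: [set w]
   tell for every w whether w has the color of e: the color classes, hence
   the outcome, are determined.  Otherwise the color class of the last ball
   is the complement of e, of size n-k+1 > n/2, so that ball is a majority
   ball; applying the same dichotomy to a consistent coloring shows that it
   is a majority ball there as well.  Finally a BM answer determines the GM
   answer, so every GM strategy is a BM strategy. *)

From mathcomp Require Import all_boot zify.
From Stdlib Require Import ClassicalEpsilon.

Set Implicit Arguments.
Unset Strict Implicit.
Unset Printing Implicit Defensive.

Lemma nat_min_leq (P : pred nat) q : P q -> nat_min P <= q.
Proof.
rewrite /nat_min => Pq; case: excluded_middle_informative => // exP.
by case: (ex_minnP exP) => m _ /(_ q Pq).
Qed.

Lemma nat_minP (P : pred nat) : (exists q, P q) -> P (nat_min P).
Proof.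
rewrite /nat_min => exP; case: excluded_middle_informative => [{}exP|//].
by case: (ex_minnP exP).
Qed.

Lemma exists_subset_card (T : finType) (A : {set T}) m :
  m <= #|A| -> exists2 B : {set T}, B \subset A & #|B| = m.
Proof.
case/card_geqP => s [uniq_s <- sA]; exists [set x in s].
  by apply/subsetP => x; rewrite inE => /sA.
by rewrite cardsE; apply/card_uniqP.
Qed.

Section Colorings.
Variable n : nat.
Implicit Types (c : {ffun 'I_n -> bool}) (e Q : {set 'I_n}).

Lemma monochromaticP c Q :
  reflect {in Q &, forall x y, c x = c y} (monochromatic c Q).
Proof.
apply: (iffP forallP) => [mQ x y xQ yQ|mQ x].
  by have /implyP/(_ xQ)/forallP/(_ y)/implyP/(_ yQ)/eqP := mQ x.
by apply/implyP => xQ; apply/forallP => y; apply/implyP => yQ; apply/eqP/mQ.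
Qed.

Lemma monochromaticS c e Q : e \subset Q -> monochromatic c Q -> monochromatic c e.
Proof.
move=> /subsetP eQ /monochromaticP mQ.
by apply/monochromaticP => x y /eQ xQ /eQ; apply: mQ.
Qed.

Lemma monochromatic_setU1 c e x w : monochromatic c e -> x \in e ->
  monochromatic c (e :|: [set w]) = (c w == c x).
Proof.
move=> /monochromaticP me xe; apply/idP/eqP => [/monochromaticP|cw].
  by apply; rewrite !inE ?eqxx ?xe ?orbT.
have col_x y : y \in e :|: [set w] -> c y = c x.
  by rewrite !inE => /orP[ye|/eqP->] //; apply: me.
by apply/monochromaticP => y y' /col_x-> /col_x->.
Qed.

Definition same_partition c c' := forall i j, (c i == c j) = (c' i == c' j).

Lemma same_partition_from c c' x :
  (forall w, (c w == c x) = (c' w == c' x)) -> same_partition c c'.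
Proof.
move=> cx i j.
have xorE (d : {ffun 'I_n -> bool}) : (d i == d j) = ((d i == d x) == (d j == d x)).
  by case: (d i); case: (d j); case: (d x).
by rewrite xorE [RHS]xorE !cx.
Qed.

Lemma same_partition_majority c c' i :
  same_partition c c' -> majority c i = majority c' i.
Proof.
by rewrite /majority => cc'; congr (_ < 2 * _); apply: eq_card => j; rewrite !inE cc'.
Qed.

Lemma same_partition_has_majority c c' :
  same_partition c c' -> has_majority c = has_majority c'.
Proof. by move=> cc'; apply: eq_existsb => i; apply: same_partition_majority. Qed.

Lemma determines_same_partition c (P : pred {ffun 'I_n -> bool}) :
  (forall c', P c' -> same_partition c c') -> determines P.
Proof.
move=> Pc; apply/orP; case: (boolP (has_majority c)) => [/existsP[i ci]|noc].
  right; apply/existsP; exists i; apply/forallP => c'; apply/implyP => /Pc cc'.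
  by rewrite -(same_partition_majority i cc').
left; apply/forallP => c'; apply/implyP => /Pc cc'.
by rewrite -(same_partition_has_majority cc').
Qed.

Lemma determines_subpred (P1 P2 : pred {ffun 'I_n -> bool}) :
  (forall c, P2 c -> P1 c) -> determines P1 -> determines P2.
Proof.
move=> P21 /orP[/forallP noP1|/existsP[i /forallP majP1]]; apply/orP; [left|right].
  by apply/forallP => c; apply/implyP => /P21; apply/implyP: (noP1 c).
apply/existsP; exists i; apply/forallP => c.
by apply/implyP => /P21; apply/implyP: (majP1 c).
Qed.

End Colorings.

Lemma not_propertyBP n (H : {set {set 'I_n}}) :
  reflect (forall c, exists2 e, e \in H & monochromatic c e) (~~ propertyB H).
Proof.
rewrite negb_exists; apply: (iffP forallP) => [noB c|monoH c].
  by have /forall_inPn[e eH /negPn] := noB c; exists e.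
by have [e eH me] := monoH c; apply/forall_inPn; exists e; rewrite ?negbK.
Qed.

Section LinkStrategy.
Variables (n r : nat) (E : {set {set 'I_n}}) (z : 'I_n).
Hypothesis r_gt0 : 0 < r.
Hypothesis rn : 2 * r < n.
Hypothesis E_uniform : forall e, e \in E -> #|e| = r.
Hypothesis E_avoid : forall e, e \in E -> z \notin e.
Hypothesis E_notB : ~~ propertyB E.
Implicit Types c : {ffun 'I_n -> bool}.

Definition link_queries : seq {set 'I_n} :=
  [seq e :|: [set v] | e <- enum E, v <- enum (~: e)].

Definition same_link_answers c c' := forall e v, e \in E -> v \notin e ->
  monochromatic c (e :|: [set v]) = monochromatic c' (e :|: [set v]).

Lemma same_link_answers_sym c c' : same_link_answers c c' -> same_link_answers c' c.
Proof. by move=> cc' e v eE ve; rewrite cc'. Qed.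

Lemma card_setC_edge e : e \in E -> #|~: e| = n - r.
Proof.
move=> eE; have := cardsC e; rewrite card_ord E_uniform // => en.
by rewrite -[in RHS]en addKn.
Qed.

Lemma link_rigid_or_majority c :
  (forall c', same_link_answers c c' -> same_partition c c') \/ majority c z.
Proof.
have [e eE me] := not_propertyBP _ E_notB c.
have [x xe] : exists x, x \in e.
  by apply/set0Pn; rewrite -card_gt0 E_uniform.
case: (boolP [exists v, (v \notin e) && (c v == c x)]) => [|/existsPn ecx].
  case/existsP => v /andP[ve /eqP cv]; left => c' cc'.
  have mev' : monochromatic c' (e :|: [set v]).
    by rewrite -cc' // (monochromatic_setU1 _ me xe) cv.
  have me' : monochromatic c' e by apply: monochromaticS mev'; apply: subsetUl.
  apply: (same_partition_from (x := x)) => w.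
  case: (boolP (w \in e)) => [we|we].
    by rewrite (monochromaticP _ _ me w x) ?(monochromaticP _ _ me' w x) ?eqxx.
  by rewrite -(monochromatic_setU1 w me xe) -(monochromatic_setU1 w me' xe) cc'.
right; rewrite /majority.
have czx : c z != c x by have := ecx z; rewrite E_avoid.
have -> : [set j | c j == c z] = ~: e.
  apply/setP => j; rewrite !inE; case: (boolP (j \in e)) => [je|je].
    by rewrite (monochromaticP _ _ me j x je xe) eq_sym (negbTE czx).
  by have := ecx j; rewrite je /=; move: czx; case: (c j); case: (c z); case: (c x).
by rewrite card_setC_edge //; lia.
Qed.

Lemma link_answers_determine c (P : pred {ffun 'I_n -> bool}) :
  (forall c', P c' -> same_link_answers c c') -> determines P.
Proof.
move=> Pc; case: (link_rigid_or_majority c) => [rigid|zc].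
  by apply: (determines_same_partition (c := c)) => c' /Pc /rigid.
apply/orP; right; apply/existsP; exists z; apply/forallP => c'; apply/implyP.
move=> /Pc /same_link_answers_sym cc'.
case: (link_rigid_or_majority c') => [rigid'|//].
by rewrite (same_partition_majority z (rigid' _ cc')).
Qed.

Lemma size_link_queries : size link_queries = #|E| * (n - r).
Proof.
rewrite size_allpairs_dep cardE.
have /all_pred1P-> : all (pred1 (n - r)) [seq size (enum (~: e)) | e <- enum E].
  by apply/allP => _ /mapP[e + ->]; rewrite mem_enum -cardE /= => /card_setC_edge->.
by rewrite sumn_nseq size_map mulnC.
Qed.

Lemma mem_link_queries Q :
  reflect (exists e v, [/\ e \in E, v \notin e & Q = e :|: [set v]])
          (Q \in link_queries).
Proof.
apply: (iffP allpairsPdep) => -[e [v [eE ve ->]]]; exists e, v.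
  by move: eE ve; rewrite !mem_enum inE.
by rewrite !mem_enum inE.
Qed.

Lemma link_strategy_valid : valid_strategy r.+1 (in_tuple link_queries).
Proof.
apply/forallP => j.
have /mem_link_queries[e [v [eE ve ->]]] := mem_tnth j (in_tuple link_queries).
by rewrite setUC cardsU1 ve E_uniform.
Qed.

Lemma link_strategy_successful : successful_GM (in_tuple link_queries).
Proof.
apply/forallP => c; apply: (link_answers_determine (c := c)).
move=> c' /forallP ans e v eE ve.
have /seq_tnthP[j ->] : e :|: [set v] \in in_tuple link_queries.
  by apply/mem_link_queries; exists e, v.
by have := ans j; rewrite /GM_answer eqb_negLR negbK => /eqP.
Qed.

End LinkStrategy.

Lemma GM_answer_BM n (c : {ffun 'I_n -> bool}) Q a :
  BM_admissible c Q a -> GM_answer c Q = a.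
Proof.
rewrite /GM_answer; case: a => [[x y] /and3P[xQ yQ cxy]|/= ->//].
by apply/negP => /monochromaticP mQ; rewrite (mQ x y xQ yQ) eqxx in cxy.
Qed.

Lemma successful_GM_BM n q (Qs : q.-tuple {set 'I_n}) :
  successful_GM Qs -> successful_BM Qs.
Proof.
move=> /forallP succ; apply/forallP => c; apply/forallP => a; apply/implyP.
move=> /forallP ans; apply: determines_subpred (succ c) => c' /forallP ans'.
by apply/forallP => j; rewrite (GM_answer_BM (ans j)) (GM_answer_BM (ans' j)).
Qed.

Lemma N_GM_leq k n q (Qs : q.-tuple {set 'I_n}) :
  valid_strategy k Qs -> successful_GM Qs -> N_GM k n <= q.
Proof. by move=> vQs sQs; apply: nat_min_leq; apply/existsP; exists Qs; rewrite vQs. Qed.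

Lemma N_BM_leq_N_GM k n q (Qs : q.-tuple {set 'I_n}) :
  valid_strategy k Qs -> successful_GM Qs -> N_BM k n <= N_GM k n.
Proof.
move=> vQs sQs.
pose feasible q :=
  [exists Qs' : q.-tuple {set 'I_n}, valid_strategy k Qs' && successful_GM Qs'].
have /existsP[Qs' /andP[vQs' sQs']] : feasible (N_GM k n).
  by apply: nat_minP; exists q; apply/existsP; exists Qs; rewrite vQs.
by apply: nat_min_leq; apply/existsP; exists Qs'; rewrite vQs' successful_GM_BM.
Qed.

Lemma monochromatic_imset m n (f : 'I_m -> 'I_n) (c : {ffun 'I_n -> bool})
    (e : {set 'I_m}) :
  monochromatic c (f @: e) = monochromatic [ffun x => c (f x)] e.
Proof.
apply/monochromaticP/monochromaticP => [mfe x y xe ye|me].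
  by rewrite !ffunE; apply: mfe; apply: imset_f.
move=> _ _ /imsetP[x xe ->] /imsetP[y ye ->].
by have := me x y xe ye; rewrite !ffunE.
Qed.

Lemma propertyB_imset m n (f : 'I_m -> 'I_n) (H : {set {set 'I_m}}) :
  propertyB [set f @: e | e : {set 'I_m} in H] -> propertyB H.
Proof.
case/existsP => c /forall_inP noH; apply/existsP; exists [ffun x => c (f x)].
by apply/forall_inP => e eH; rewrite -monochromatic_imset noH ?imset_f.
Qed.

Lemma complete_not_propertyB m r :
  2 * r <= m.+1 -> ~~ propertyB [set e : {set 'I_m} | #|e| == r].
Proof.
move=> rm; apply/not_propertyBP => c; pose A := [set x | c x].
have [/exists_subset_card|/exists_subset_card] : r <= #|A| \/ r <= #|~: A|.
  by have := cardsC A; rewrite card_ord; lia.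
all: case=> e /subsetP eA er; exists e; rewrite ?inE ?er //.
all: apply/monochromaticP => x y /eA + /eA; rewrite !inE.
  by move=> -> ->.
by move=> /negbTE-> /negbTE->.
Qed.

Lemma m_B_attained r m : 2 * r <= m.+1 ->
  exists H : {set {set 'I_m}},
    [/\ #|H| = m_B r m, forall e, e \in H -> #|e| = r & ~~ propertyB H].
Proof.
move=> rm; pose feasible q := [exists H : {set {set 'I_m}},
  [&& #|H| == q, [forall e in H, #|e| == r] & ~~ propertyB H]].
have /existsP[H /and3P[/eqP cardH /forall_inP unifH noB]] : feasible (m_B r m).
  apply: nat_minP; pose K := [set e : {set 'I_m} | #|e| == r].
  exists #|K|; apply/existsP; exists K.
  rewrite eqxx complete_not_propertyB // andbT.
  by apply/forall_inP => e; rewrite inE.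
by exists H; split=> // e /unifH/eqP.
Qed.

Theorem theorem9 (k n : nat) :
  2 <= k -> 2 * k - 1 <= n ->
  N_BM k n <= N_GM k n /\ N_GM k n <= (n - k + 1) * m_B (k - 1) (n - 1).
Proof.
move=> k2 kn; have [r kr] : exists r, k = r.+1 by exists k.-1; lia.
have [m nm] : exists m, n = m.+1 by exists n.-1; lia.
subst k n; rewrite !subn1 /=.
have [H [cardH H_uniform H_notB]] := @m_B_attained r m ltac:(lia).
pose f := widen_ord (leqnSn m).
have f_inj : injective f by move=> x y [/ord_inj].
pose E := [set f @: e | e : {set 'I_m} in H].
have E_uniform e : e \in E -> #|e| = r.
  by case/imsetP => e' /H_uniform eH ->; rewrite card_imset.
have E_avoid e : e \in E -> ord_max \notin e.
  case/imsetP => e' _ ->; apply/imsetP => -[x _ /(congr1 val) /= xm].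
  by have := ltn_ord x; rewrite -xm ltnn.
have E_notB : ~~ propertyB E by apply: contra H_notB; apply: propertyB_imset.
have vQs := link_strategy_valid E_uniform.
have sQs := @link_strategy_successful _ r E ord_max ltac:(lia) ltac:(lia)
  E_uniform E_avoid E_notB.
split; first exact: N_BM_leq_N_GM vQs sQs.
apply: leq_trans (N_GM_leq vQs sQs) _; rewrite (size_link_queries E_uniform) mulnC.
rewrite -cardH (_ : m.+1 - r.+1 + 1 = m.+1 - r); last by lia.
by rewrite leq_mul2l leq_imset_card orbT.
Qed.
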